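(* Let $G=(V,E)$ be a graph, $v\in V$, and $S_v$ the partial star product of $v$. (a) If $e=(v,u),f=(v,w)\in E_v$ satisfy $(e,f)\notin\mathfrak d_v^*$, then $e$ and $f$ span exactly one square in $G$, this square is chordless, and its top vertex $x$ is unique, i.e. $u$ and $w$ are the only common neighbours of $v$ and $x$ in $G$. (b) Conversely, if $x$ is a non-primal vertex of $S_v$, then there is exactly one chordless square in $S_v$ that contains $x$ and is spanned by two edges $e,f\in E_v$ with $(e,f)\notin\mathfrak d_v^*$.
   Context: All graphs are finite, simple and undirected. For a graph $G=(V,E)$ and $v\in V$, $E_v$ denotes the set of edges incident to $v$. For two distinct adjacent edges $e=(v,u)$, $f=(v,w)$, a square spanned by $e$ and $f$ is a $4$-cycle $v,u,x,w,v$ in $G$ with $x\notin\{v,u,w\}$; $x$ is its top vertex. The square is chordless if neither $(u,w)$ nor $(v,x)$ is an edge of $G$. In a chordless square $v,u,x,w$, the edge $(x,w)$ is the opposite edge of $(v,u)$ and $(x,u)$ is the opposite edge of $(v,w)$ (and vice versa). The relation $\delta(G)\subseteq E\times E$: $(e,f)\in\delta(G)$ iff (i) $e,f$ are distinct adjacent edges and it is not the case that $e$ and $f$ span exactly one square and that square is chordless; or (ii) $e$ and $f$ are opposite edges of a chordless square; or (iii) $e=f$. For a reflexive symmetric relation $R$, $R^*$ denotes its transitive closure (finest equivalence relation containing $R$). Define $\mathfrak d_v=((E_v\times E)\cup(E\times E_v))\cap\delta(G)$ and $\mathfrak d_v^*$ the finest equivalence relation on $E$ containing $\mathfrak d_v$.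 Let $F_v\subseteq E\setminus E_v$ be the set of edges that are the edges not incident to $v$ of some chordless square spanned by two edges $e,e'\in E_v$ with $(e,e')\notin\mathfrak d_v^*$. The partial star product (PSP) $S_v$ is the subgraph of $G$ with edge set $E_v\cup F_v$ and vertex set the set of endpoints of these edges; $v$ is its center, neighbours of $v$ are its primal vertices, and the remaining vertices of $S_v$ other than $v$ are non-primal vertices. *)

(* A finite simple graph is a symmetric irreflexive
   relation [adj : rel T] on a finType [T]; edges are the 2-element sets
   [set u; w] with [adj u w]. *)
From mathcomp Require Import all_boot.
Set Implicit Arguments.
Unset Strict Implicit.
Unset Printing Implicit Defensive.

Section PSP.
Variables (T : finType) (adj : rel T).

Definition edge (e : {set T}) : bool :=
  [exists u, exists w, adj u w && (e == [set u; w])].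

Definition incident (v : T) (e : {set T}) : bool := edge e && (v \in e).

(* v,u,x,w,v is a square (4-cycle) w.r.t. adjacency r, spanned by the
   distinct edges (v,u),(v,w); x is its top vertex *)
Definition square (r : rel T) (v u w x : T) : bool :=
  [&& r v u, r v w, u != w, r u x, r w x & x \notin [set v; u; w]].

Definition chordless (r : rel T) (v u w x : T) : bool :=
  ~~ r u w && ~~ r v x.

Definition delta1 (e f : {set T}) : bool :=
  [exists v, exists u, exists w,
    [&& e == [set v; u], f == [set v; w], adj v u, adj v w, u != w &
        ~~ ((#|[set x | square adj v u w x]| == 1) &&
            [forall x, square adj v u w x ==> chordless adj v u w x])]].

Definition delta2 (e f : {set T}) : bool :=
  [exists v, exists u, exists w, exists x,
    [&& square adj v u w x, chordless adj v u w x &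
        ((e == [set v; u]) && (f == [set x; w])) ||
        ((e == [set x; w]) && (f == [set v; u]))]].

Definition delta3 (e f : {set T}) : bool := edge e && (e == f).

Definition delta (e f : {set T}) : bool := [|| delta1 e f, delta2 e f | delta3 e f].

Definition dv (v : T) (e f : {set T}) : bool :=
  [&& incident v e || incident v f, edge e, edge f & delta e f].

(* d_v^* : finest equivalence relation containing d_v (reflexive-symmetric-
   transitive closure; on edges this is the equivalence closure on E) *)
Definition dvstar (v : T) (e f : {set T}) : bool :=
  connect (fun a b => dv v a b || dv v b a) e f.

Definition Fv (v : T) (g : {set T}) : bool :=
  [exists u, exists w, exists x,
    [&& square adj v u w x, chordless adj v u w x,
        ~~ dvstar v [set v; u] [set v; w] &
        (g == [set u; x]) || (g == [set w; x])]].

Definition SvE (v : T) (g : {set T}) : bool := incident v g || Fv v g.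

Definition adjS (v : T) : rel T := fun a b => (a != b) && SvE v [set a; b].

Definition inSv (v y : T) : bool := [exists g, SvE v g && (y \in g)].

Definition nonprimal (v y : T) : bool := [&& inSv v y, y != v & ~~ adj v y].

Definition psp_square (v x u w y : T) : Prop :=
  [/\ square (adjS v) v u w y, chordless (adjS v) v u w y,
      x \in [set v; u; w; y] &
      [/\ adj v u, adj v w & ~~ dvstar v [set v; u] [set v; w]]].

End PSP.

From mathcomp Require Import all_boot.
Set Implicit Arguments. Unset Strict Implicit. Unset Printing Implicit Defensive.

(* Part (a).  If the spokes e = (v,u) and f = (v,w) are not d_v^*-related,
   then in particular they are not delta-related by rule (i), so they span
   exactly one square v,u,x,w and it is chordless.  If some y other than u, w
   were a further common neighbour of v and x, two d_v-chains would link
   (v,u) and (v,w) to (v,y): (v,u) is opposite to (x,y) in the square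
   v,u,x,y (or related to (v,y) by rule (i) when that square has the chord
   uy), and (y,x),(y,v) span the two distinct squares with tops u and w, so
   they are related by rule (i).  Hence e d_v^* f, a contradiction.

   Part (b).  Edges of S_v are edges of G; S_v has no edge between two
   primal vertices, nor from v to a non-primal vertex.  A non-primal x lies
   on an edge of F_v, hence is the top of a chordless square spanned by two
   unrelated spokes; this square is a chordless square of S_v.  Any other
   such square through x has x as its top, and by part (a) its spokes end in
   the only two common neighbours of v and x, so it is the same square. *)

Section PartialStarProduct.
Variables (T : finType) (adj : rel T).
Hypotheses (adj_sym : symmetric adj) (adj_irr : irreflexive adj).

Lemma squareP (r : rel T) v u w x : reflect
  ([/\ r v u, r v w, u != w, r u x & [/\ r w x, x != v, x != u & x != w]])
  (square r v u w x).
Proof.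
rewrite /square !inE !negb_or -!andbA.
by apply: (iffP idP) => [/and5P [-> -> -> -> /and4P [-> -> -> ->]]
                      | [-> -> -> -> [-> -> -> ->]]].
Qed.

Lemma square_swap (r : rel T) v u w x : square r v u w x -> square r v w u x.
Proof. by move/squareP => [? ? uw ? [? ? ? ?]]; apply/squareP; rewrite eq_sym. Qed.

Lemma chordless_swap v u w x : chordless adj v u w x -> chordless adj v w u x.
Proof. by rewrite /chordless adj_sym. Qed.

Lemma eq_set2 (a b c d : T) : [set a; b] = [set c; d] ->
  (a = c /\ b = d) \/ (a = d /\ b = c).
Proof.
move=> E.
have ha : a \in [set c; d] by rewrite -E set21.
have hb : b \in [set c; d] by rewrite -E set22.
have hc : c \in [set a; b] by rewrite E set21.
have hd : d \in [set a; b] by rewrite E set22.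
by move: ha hb hc hd => /set2P[] -> /set2P[] -> /set2P[] ? /set2P[] ?; subst; auto.
Qed.

Lemma set2_of_mem (a b c d : T) : a != b ->
  a \in [set c; d] -> b \in [set c; d] -> [set c; d] = [set a; b].
Proof.
move=> ab ha hb.
case/set2P: ha ab => -> ab; case/set2P: hb ab => -> ab //.
all: by [rewrite eqxx in ab | exact: setUC].
Qed.

Lemma edge_set2 a b : adj a b -> edge adj [set a; b].
Proof. by move=> ab; apply/existsP; exists a; apply/existsP; exists b; rewrite ab eqxx. Qed.

Lemma adj_of_edge a b : edge adj [set a; b] -> a != b -> adj a b.
Proof.
case/existsP => u /existsP [w /andP [uw /eqP /eq_set2 E]] ab.
by case: E => [[-> ->] | [-> ->]]; rewrite // adj_sym.
Qed.

Lemma incident_spoke v u : adj v u -> incident adj v [set v; u].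
Proof. by move=> vu; rewrite /incident edge_set2 // set21. Qed.

Lemma dv_dvstar v e f : dv adj v e f -> dvstar adj v e f.
Proof. by move=> ef; apply: connect1; rewrite ef. Qed.

Lemma dvstar_sym v e f : dvstar adj v e f -> dvstar adj v f e.
Proof.
have Rsym : symmetric (fun a b => dv adj v a b || dv adj v b a).
  by move=> a b; rewrite orbC.
by rewrite /dvstar (sym_connect_sym Rsym).
Qed.

Lemma dvstar_trans v : transitive (dvstar adj v).
Proof. exact: connect_trans. Qed.

(* The spokes (a,b),(a,c) span exactly one square, and it is chordless:
   the configuration excluded by rule (i) of delta. *)
Definition unique_chordless_square (a b c : T) : bool :=
  (#|[set x | square adj a b c x]| == 1) &&
  [forall x, square adj a b c x ==> chordless adj a b c x].

Lemma dv_adjacent v a b c : incident adj v [set a; b] ->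
  adj a b -> adj a c -> b != c -> ~~ unique_chordless_square a b c ->
  dv adj v [set a; b] [set a; c].
Proof.
move=> inc ab ac bc nuc; apply/and4P; split; rewrite ?inc ?edge_set2 //.
apply/orP; left; apply/existsP; exists a; apply/existsP; exists b.
by apply/existsP; exists c; rewrite !eqxx ab ac bc.
Qed.

Lemma dv_opposite v u w x : square adj v u w x -> chordless adj v u w x ->
  dv adj v [set v; u] [set x; w].
Proof.
move=> sq ch; have /squareP [vu _ _ _ [wx _ _ _]] := sq.
apply/and4P; split; first by rewrite incident_spoke.
- exact: edge_set2.
- by rewrite edge_set2 // adj_sym.
apply/orP; right; apply/orP; left; apply/existsP; exists v.
apply/existsP; exists u; apply/existsP; exists w; apply/existsP; exists x.
by rewrite sq ch !eqxx.
Qed.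

Lemma dv_chord v u w x : square adj v u w x -> adj u w ->
  dv adj v [set v; u] [set v; w].
Proof.
move=> sq uw; have /squareP [vu vw u_w _ _] := sq.
apply: dv_adjacent; rewrite ?incident_spoke //.
by apply/negP => /andP [_ /forallP /(_ x)]; rewrite sq /chordless uw.
Qed.

Lemma dv_two_tops v a b c t1 t2 : incident adj v [set a; b] ->
  square adj a b c t1 -> square adj a b c t2 -> t1 != t2 ->
  dv adj v [set a; b] [set a; c].
Proof.
move=> inc sq1 sq2 t12; have /squareP [ab ac bc _ _] := sq1.
apply: dv_adjacent => //; apply/negP => /andP [/cards1P [t E] _].
have : t1 \in [set t] by rewrite -E inE.
have : t2 \in [set t] by rewrite -E inE.
by move=> /set1P E2 /set1P E1; rewrite E1 E2 eqxx in t12.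
Qed.

Lemma unrelated_spokes v u w : adj v u -> adj v w ->
  ~~ dvstar adj v [set v; u] [set v; w] ->
  u != w /\ unique_chordless_square v u w.
Proof.
move=> vu vw nrel.
have uw : u != w by apply: contraNneq nrel => ->; exact: connect0.
split=> //; apply: contraNT nrel => nuc.
by apply/dv_dvstar/dv_adjacent; rewrite ?incident_spoke.
Qed.

(* Indeed (v,u) is opposite to (x,y) in the square v,u,x,y (unless its
   chord (u,y) relates (v,u) and (v,y) at once), and (y,x),(y,v) span the
   two distinct squares y,v,u,x and y,v,w,x. *)
Lemma common_neighbour_related v u w x y :
  square adj v u w x -> chordless adj v u w x ->
  adj v y -> adj x y -> y != u -> y != w ->
  dvstar adj v [set v; u] [set v; y].
Proof.
move=> sq ch vy xy yu yw; have /squareP [vu vw uw ux [wx xv xu x_w]] := sq.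
have yx : y != x by apply: contraTneq xy => ->; rewrite adj_irr.
have uv : u != v by apply: contraTneq vu => ->; rewrite adj_irr.
have wv : w != v by apply: contraTneq vw => ->; rewrite adj_irr.
have sq_vuyx : square adj v u y x.
  apply/squareP; split; [by [] | by [] | by rewrite eq_sym | by [] |].
  by split; [rewrite adj_sym | | | rewrite eq_sym].
have [uy | nuy] := boolP (adj u y).
  exact/dv_dvstar/(dv_chord sq_vuyx uy).
have vu_xy : dv adj v [set v; u] [set x; y].
  apply: dv_opposite => //.
  by move: ch; rewrite /chordless nuy => /andP [].
have top_y t : adj v t -> adj x t -> t != y -> t != v -> t != x ->
    square adj y v x t.
  move=> vt xt ty tv tx; apply/squareP.
  by split; [rewrite adj_sym | rewrite adj_sym | rewrite eq_sym | | split].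
have yv_yx : dv adj v [set y; v] [set y; x].
  apply: (@dv_two_tops v y v x u w).
  - by rewrite /incident set22 andbT edge_set2 // adj_sym.
  - by apply: top_y; rewrite // 1?adj_sym // eq_sym.
  - by apply: top_y; rewrite // 1?adj_sym // eq_sym.
  - exact: uw.
apply: dvstar_trans (dv_dvstar vu_xy) _.
by rewrite setUC [[set v; y]]setUC; apply/dvstar_sym/dv_dvstar.
Qed.

Lemma unrelated_spokes_square v u w : adj v u -> adj v w ->
  ~~ dvstar adj v [set v; u] [set v; w] ->
  exists x : T,
    [/\ square adj v u w x, chordless adj v u w x,
        (forall x' : T, square adj v u w x' -> x' = x) &
        (forall y : T, adj v y -> adj x y -> y = u \/ y = w)].
Proof.
move=> vu vw nrel.
have [uw /andP [/cards1P [x tops] /forallP all_chordless]] :=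
  unrelated_spokes vu vw nrel.
have top x' : square adj v u w x' = (x' == x).
  by rewrite -in_set1 -tops inE.
have sq : square adj v u w x by rewrite top.
have ch : chordless adj v u w x by have := all_chordless x; rewrite sq.
exists x; split=> // [x' | y vy xy]; first by rewrite top => /eqP.
have [-> | yu] := eqVneq y u; first by left.
have [-> | yw] := eqVneq y w; first by right.
case/negP: nrel; apply: dvstar_trans (common_neighbour_related sq ch vy xy yu yw) _.
exact/dvstar_sym/(common_neighbour_related (square_swap sq) (chordless_swap ch)).
Qed.

Lemma square_sub (r r' : rel T) v u w x : subrel r r' ->
  square r v u w x -> square r' v u w x.
Proof.
move=> sub /squareP [vu vw uw ux [wx xv xu x_w]].
by apply/squareP; split; rewrite ?sub.
Qed.

Lemma Fv_edge v g : Fv adj v g ->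
  exists a b, [/\ g = [set a; b], adj a b, adj v a, ~~ adj v b & b != v].
Proof.
case/existsP => u /existsP [w /existsP [x /and4P [sq /andP [_ nvx] _ gE]]].
have /squareP [vu vw _ ux [wx xv _ _]] := sq.
by case/orP: gE => /eqP ->; [exists u, x | exists w, x].
Qed.

Lemma adjS_adj v : subrel (adjS adj v) adj.
Proof.
move=> a b /andP [ab /orP [/andP [e _] | /Fv_edge [c [d [E cd _ _ _]]]]].
  exact: adj_of_edge.
by case: (eq_set2 E) => [[-> ->] | [-> ->]]; rewrite // adj_sym.
Qed.

Lemma adjS_primal v u w : adj v u -> adj v w -> ~~ adjS adj v u w.
Proof.
move=> vu vw; apply/negP.
case/andP => _ /orP [/andP [_] | /Fv_edge [a [b [E _ _ nvb _]]]].
  by case/set2P => vE; [move: vu | move: vw]; rewrite -vE adj_irr.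
have : b \in [set u; w] by rewrite E set22.
by case/set2P => bE; move: nvb; rewrite bE ?vu ?vw.
Qed.

Lemma adjS_center v x : ~~ adj v x -> ~~ adjS adj v v x.
Proof.
move=> nvx; apply/negP.
case/andP => vx /orP [/andP [e _] | /Fv_edge [a [b [E _ va _ bv]]]].
  by move: nvx; rewrite adj_of_edge.
have : v \in [set a; b] by rewrite -E set21.
by case/set2P => vE; [move: va | move: bv]; rewrite -vE ?adj_irr ?eqxx.
Qed.

Lemma nonprimal_top v x : nonprimal adj v x ->
  exists u w, [/\ square adj v u w x, chordless adj v u w x &
                  ~~ dvstar adj v [set v; u] [set v; w]].
Proof.
case/and3P => /existsP [g /andP [Sg xg]] xv nvx.
case/orP: Sg => [/andP [/existsP [a /existsP [b /andP [ab /eqP gE]]] vg] |].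
  have E : [set a; b] = [set v; x] by apply: set2_of_mem; rewrite -?gE // eq_sym.
  case/negP: nvx; apply: adj_of_edge; last by rewrite eq_sym.
  by rewrite -E edge_set2.
case/existsP => u /existsP [w /existsP [y /and4P [sq ch nrel gE]]].
have /squareP [vu vw _ _ _] := sq.
suff -> : x = y by exists u, w.
by case/orP: gE xg => /eqP -> /set2P [] // xE; move: nvx; rewrite xE ?vu ?vw.
Qed.

Lemma adjS_spoke v u : adj v u -> adjS adj v v u.
Proof.
move=> vu; rewrite /adjS /SvE incident_spoke // andbT.
by apply: contraTneq vu => ->; rewrite adj_irr.
Qed.

(* A chordless square of G spanned by unrelated spokes is a chordless
   square of S_v, since its two far edges belong to F_v. *)
Lemma psp_square_of_top v u w x : square adj v u w x ->
  chordless adj v u w x -> ~~ dvstar adj v [set v; u] [set v; w] ->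
  psp_square adj v x u w x.
Proof.
move=> sq ch nrel; have /squareP [vu vw uw ux [wx xv xu x_w]] := sq.
have far_edge g : (g == [set u; x]) || (g == [set w; x]) -> Fv adj v g.
  move=> gE; apply/existsP; exists u; apply/existsP; exists w.
  by apply/existsP; exists x; rewrite sq ch nrel.
split; last 2 first.
- by rewrite !inE eqxx !orbT.
- by split.
- apply/squareP; split; rewrite ?adjS_spoke //.
    by rewrite /adjS eq_sym xu /SvE far_edge ?eqxx ?orbT.
  split=> //; by rewrite /adjS eq_sym x_w /SvE far_edge ?eqxx ?orbT.
- by rewrite /chordless adjS_primal // adjS_center //; case/andP: ch.
Qed.

Lemma psp_square_top v x u w y : x != v -> ~~ adj v x ->
  psp_square adj v x u w y -> y = x.
Proof.
move=> xv nvx [_ _ xin [vu vw _]].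
move: xin; rewrite !inE -!orbA => /or4P [] /eqP xE //.
- by rewrite xE eqxx in xv.
- by rewrite xE vu in nvx.
- by rewrite xE vw in nvx.
Qed.

Lemma psp_square_unique v x u w u' w' y : x != v -> ~~ adj v x ->
  adj v u -> adj v w -> adj u x -> adj w x -> u != w ->
  psp_square adj v x u' w' y -> [set u'; w'] = [set u; w] /\ y = x.
Proof.
move=> xv nvx vu vw ux wx uw psq.
have yx := psp_square_top xv nvx psq; subst y.
case: psq => sqS _ _ [vu' vw' nrel].
have [z [_ _ top common]] := unrelated_spokes_square vu' vw' nrel.
have zx := top x (square_sub (@adjS_adj v) sqS); subst z.
split=> //; apply: (set2_of_mem uw); apply/set2P.
- by apply: common; rewrite // adj_sym.
- by apply: common; rewrite // adj_sym.
Qed.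
End PartialStarProduct.

Theorem lemma3p2 (T : finType) (adj : rel T)
    (adj_sym : symmetric adj) (adj_irr : irreflexive adj) (v : T) :
  (forall u w : T, adj v u -> adj v w ->
     ~~ dvstar adj v [set v; u] [set v; w] ->
     exists x : T,
       [/\ square adj v u w x, chordless adj v u w x,
           (forall x' : T, square adj v u w x' -> x' = x) &
           (forall y : T, adj v y -> adj x y -> y = u \/ y = w)])
  /\
  (forall x : T, nonprimal adj v x ->
     exists u w y : T,
       psp_square adj v x u w y /\
       (forall u' w' y' : T, psp_square adj v x u' w' y' ->
          [set u'; w'] = [set u; w] /\ y' = y)).
Proof.
split=> [u w | x nx]; first exact: unrelated_spokes_square.
have [u [w [sq ch nrel]]] := nonprimal_top adj_sym nx.
have /squareP [vu vw uw ux [wx _ _ _]] := sq.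
have /and3P [_ xv nvx] := nx.
exists u, w, x; split; first exact: psp_square_of_top.
by move=> u' w' y'; apply: psp_square_unique.
Qed.
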